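(* Let $v>0$, $d>0$ and $s\ge\frac d2$. Let $M=\lfloor 2s/d\rfloor+1$. For $i\in\{1,\dots,M\}$, lane $i$ is the horizontal line $y=s-(i-1)d$, and the robots of lane $i$ are at time $0$ at the positions $(s+kd,\ s-(i-1)d)$, $k\in\mathbb{Z}_{\ge0}$, all moving with constant velocity $(-v,0)$; a robot reaches the target when its distance to the origin is at most $s$. For $j\in\{1,\dots,M\}$ let $d_j=s-\sqrt{s^2-(s-(j-1)d)^2}$, and let $$J=\begin{cases}\lfloor s/d\rfloor+1,&\text{if } |s-\lfloor s/d\rfloor d|\le|s-\lceil s/d\rceil d|,\\ \lceil s/d\rceil+1,&\text{otherwise.}\end{cases}$$ Then $d_J=\min_{1\le j\le M}d_j$, so the first robot to reach the target is the one starting at $(s,s-(J-1)d)$, and, measuring time from this first arrival, for every $T>0$ the throughput is $$f_p(T)=\frac1T\sum_{i=1}^{M}N_i(T)-\frac1T,\qquad N_i(T)=\begin{cases}\left\lfloor\frac{vT-d_i+d_J}{d}+1\right\rfloor,& T\ge\frac{d_i-d_J}{v},\\ 0,&\text{otherwise,}\end{cases}$$ and $\displaystyle\lim_{T\to\infty}f_p(T)=\left\lfloor\frac{2s}{d}+1\right\rfloor\frac vd$.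
   Context: Throughput at time $T>0$ after the first robot reaches the target: $f(T)=\frac{N(T)-1}{T}$, where $N(T)$ is the number of robots that reached the target (closed disc of radius $s$ centred at the origin) by time $T$, time $0$ being the arrival of the first robot. $N_i(T)$ is the number of robots of lane $i$ that have arrived by time $T$. This is the ''parallel lanes'' strategy. *)

From HB Require Import structures.
From mathcomp Require Import all_boot all_order all_algebra.
From mathcomp Require Import all_classical all_reals all_analysis.
From mathcomp Require Import finmap.
Set Implicit Arguments. Unset Strict Implicit. Unset Printing Implicit Defensive.
Import Order.TTheory GRing.Theory Num.Theory.
Local Open Scope classical_set_scope.
Local Open Scope ring_scope.

Section ParallelLanes.
Variables (R : realType) (v d s : R).

(* number of lanes M = floor(2s/d) + 1 (floor(2s/d) >= 0 since s >= d/2) *)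
Definition nlanes : nat := (`|Num.floor (2 * s / d)|%N).+1.

Definition lane_y (i : nat) : R := s - (i%:R - 1) * d.

Definition robot_pos (i k : nat) (t : R) : R * R :=
  (s + k%:R * d - v * t, lane_y i).

Definition in_target (p : R * R) : Prop :=
  Num.sqrt (p.1 ^+ 2 + p.2 ^+ 2) <= s.

Definition valid_lane (i : nat) : Prop := (1 <= i <= nlanes)%N.

Definition first_arrival_time : R :=
  inf [set t : R | 0 <= t /\
         exists i k, valid_lane i /\ in_target (robot_pos i k t)].

Definition reached_by (i k : nat) (T : R) : Prop :=
  exists t : R, 0 <= t /\ t <= first_arrival_time + T /\
                in_target (robot_pos i k t).

Definition N_lane (i : nat) (T : R) : nat :=
  (#|` fset_set [set k : nat | reached_by i k T] |)%fset.

Definition N_total (T : R) : nat :=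
  (#|` fset_set [set ik : nat * nat | valid_lane ik.1 /\ reached_by ik.1 ik.2 T] |)%fset.

Definition throughput (T : R) : R := ((N_total T)%:R - 1) / T.

Definition dist_j (j : nat) : R := s - Num.sqrt (s ^+ 2 - (s - (j%:R - 1) * d) ^+ 2).

Definition Jidx : nat :=
  if `|s - (Num.floor (s / d))%:~R * d| <= `|s - (Num.ceil (s / d))%:~R * d|
  then (`|Num.floor (s / d)|%N).+1
  else (`|Num.ceil (s / d)|%N).+1.

Definition N_formula (i : nat) (T : R) : int :=
  if (dist_j i - dist_j Jidx) / v <= T
  then Num.floor ((v * T - dist_j i + dist_j Jidx) / d + 1)
  else 0.

End ParallelLanes.

(* Lane i meets the target disc in a chord of half-length s - d_i, so robot k of
   lane i enters the disc at time (d_i + k d) / v.  The first arrival comes from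
   the lane closest to the centre, and |s - (J-1) d| is the distance from s to
   the nearest multiple of d, attained at floor(s/d) or ceil(s/d).  Measured from
   that arrival, robot k of lane i has arrived by time T iff
   k d <= v T + d_J - d_i, which counts floor((v T + d_J - d_i)/d + 1) robots.
   Since 0 <= d_J <= d_i <= s, every lane count is v T / d + O(1), hence
   f_p(T) = M v / d + O(1/T). *)

From mathcomp Require Import all_boot all_order all_algebra.
From mathcomp Require Import all_classical all_reals all_analysis.
From mathcomp Require Import finmap.
From mathcomp Require Import ring lra.
Set Implicit Arguments. Unset Strict Implicit. Unset Printing Implicit Defensive.
Import Order.TTheory GRing.Theory Num.Theory.
Import numFieldNormedType.Exports.
Local Open Scope classical_set_scope.
Local Open Scope ring_scope.

Lemma card_fset_set_seq (T : choiceType) (A : set T) (r : seq T) :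
  uniq r -> (forall x, A x <-> x \in r) -> (#|` fset_set A|)%fset = size r.
Proof.
move=> r_uniq Ar.
have -> : A = [set` [fset x in r]%fset].
  by apply/funext => x; apply/propext; rewrite Ar /= inE.
by rewrite set_fsetK card_fseq undup_id.
Qed.

Lemma sqrt_sqrD_le (R : rcfType) (r x y : R) : 0 <= r -> y ^+ 2 <= r ^+ 2 ->
  (Num.sqrt (x ^+ 2 + y ^+ 2) <= r) = (`|x| <= Num.sqrt (r ^+ 2 - y ^+ 2)).
Proof.
move=> r_ge0 yr.
by rewrite -{1}(ger0_norm r_ge0) -!sqrtr_sqr !ler_sqrt ?lerBrDr ?add0r ?sqr_ge0.
Qed.

Lemma nearest_multiple (R : archiRealFieldType) (d s : R) (n : int) : 0 < d ->
  Num.min `|s - (Num.floor (s / d))%:~R * d| `|s - (Num.ceil (s / d))%:~R * d|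
    <= `|s - n%:~R * d|.
Proof.
move=> d_gt0.
have fl_le : (Num.floor (s / d))%:~R * d <= s by rewrite -ler_pdivlMr // floor_le.
have cl_ge : s <= (Num.ceil (s / d))%:~R * d by rewrite -ler_pdivrMr // ceil_ge.
have [n_le|fl_lt] := lerP n (Num.floor (s / d)).
  rewrite ge_min; apply/orP; left.
  have : n%:~R * d <= (Num.floor (s / d))%:~R * d by rewrite ler_pM2r // ler_int.
  by move=> h; rewrite !ger0_norm; lra.
rewrite ge_min; apply/orP; right.
have : (Num.ceil (s / d))%:~R * d <= n%:~R * d.
  by rewrite ler_pM2r // ler_int ceil_le_int ltW // -floor_lt_int.
by move=> h; rewrite !ler0_norm; lra.
Qed.

Lemma cvgr_dist_le_inv (R : realFieldType) (f : R -> R) (l K : R) :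
  (\forall T \near +oo, `|l - f T| <= K / T) -> f x @[x --> +oo] --> l.
Proof.
move=> fK; apply/cvgrPdist_le => e e0; near=> T.
apply: (@le_trans _ _ (K / T)); first by near: T.
have T_gt0 : 0 < T by near: T; apply: nbhs_pinfty_gt; exact: num_real.
have KeT : K / e <= T by near: T; apply: nbhs_pinfty_ge; exact: num_real.
by rewrite ler_pdivrMr // mulrC -ler_pdivrMr.
Unshelve. all: by end_near.
Qed.

Definition nmultiples_le {R : archiNumDomainType} (d D : R) : nat :=
  if 0 <= D then (`|Num.floor (D / d)|%N).+1 else 0.

Section Multiples.
Variables (R : archiRealFieldType) (d D : R).
Hypothesis d_gt0 : 0 < d.

Lemma nmultiples_leP (k : nat) : (k < nmultiples_le d D)%N = (k%:R * d <= D).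
Proof.
rewrite /nmultiples_le; case: ifPn => [D_ge0|]; last first.
  rewrite -ltNge => D_lt0; apply/esym/negbTE; rewrite -ltNge.
  by rewrite (lt_le_trans D_lt0) // mulr_ge0 // ltW.
have fl_ge0 : 0 <= Num.floor (D / d) by rewrite floor_ge0 divr_ge0 // ltW.
by rewrite ltnS -lez_nat gez0_abs // floor_ge_int -ler_pdivlMr.
Qed.

Lemma nmultiples_leE :
  (nmultiples_le d D)%:Z = if 0 <= D then Num.floor (D / d + 1) else 0.
Proof.
rewrite /nmultiples_le; case: ifPn => // D_ge0.
rewrite floorDrz ?intr_int // floor1 -addn1 PoszD gez0_abs //.
by rewrite floor_ge0 divr_ge0 // ltW.
Qed.

Lemma nmultiples_le_bounds : 0 <= D ->
  D / d < (nmultiples_le d D)%:R <= D / d + 1.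
Proof.
move=> D_ge0; have -> : (nmultiples_le d D)%:R = (Num.floor (D / d + 1))%:~R :> R.
  by have := nmultiples_leE; rewrite D_ge0 => <-.
have := floor_le (D / d + 1); have := floorD1_gt (D / d + 1).
by move=> *; apply/andP; split; lra.
Qed.
End Multiples.

Section ParallelLanesProof.
Variables (R : realType) (v d s : R).
Hypotheses (v_gt0 : 0 < v) (d_gt0 : 0 < d) (half_d_le_s : d / 2 <= s).

Local Notation lane_y := (lane_y d s).
Local Notation valid := (valid_lane d s).
Local Notation dist := (dist_j d s).
Local Notation J := (Jidx d s).
Local Notation M := (nlanes d s).

Lemma s_gt0 : 0 < s.
Proof. by move: d_gt0 half_d_le_s => ? ?; lra. Qed.

Lemma floor_2s_div_ge0 : 0 <= Num.floor (2 * s / d).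
Proof. by rewrite floor_ge0 ltW // divr_gt0 // mulr_gt0 // s_gt0. Qed.

Lemma lane_y_pred i : (1 <= i)%N -> lane_y i = s - (i.-1)%:R * d.
Proof. by case: i => // i _; rewrite /lane_y mulrSr addrK. Qed.

Lemma lane_y_absz_succ (n : int) : 0 <= n -> lane_y (`|n|.+1) = s - n%:~R * d.
Proof. by move=> n_ge0; rewrite lane_y_pred //= -[in RHS](gez0_abs n_ge0). Qed.

Lemma valid_laneE i : valid i = (1 <= i)%N && (- s <= lane_y i).
Proof.
rewrite /valid_lane /nlanes; case: i => //= i.
rewrite ltnS -lez_nat gez0_abs ?floor_2s_div_ge0 // floor_ge_int ler_pdivlMr // lane_y_pred //=.
by rewrite lerBrDr addrC lerBlDl -mulr2n mulr_natl.
Qed.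

Lemma lane_y_sqr_le i : valid i -> lane_y i ^+ 2 <= s ^+ 2.
Proof.
rewrite valid_laneE => /andP[i_ge1 y_ge].
have y_le : lane_y i <= s by rewrite lane_y_pred // gerBl mulr_ge0 // ltW.
rewrite -real_normK ?num_real // lerXn2r ?nnegrE ?normr_ge0 ?(ltW s_gt0) //.
by rewrite ler_norml y_ge.
Qed.

Lemma dist_ge0 i : 0 <= dist i.
Proof.
rewrite subr_ge0 -[X in _ <= X](ger0_norm (ltW s_gt0)) -sqrtr_sqr.
by apply: ler_wsqrtr; rewrite gerBl sqr_ge0.
Qed.

Lemma in_target_lane i x : valid i ->
  in_target s (x, lane_y i) <-> `|x| <= s - dist i.
Proof.
move=> /lane_y_sqr_le y_le.
by rewrite /in_target /= sqrt_sqrD_le ?(ltW s_gt0) // /dist_j subKr.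
Qed.

Let fl := Num.floor (s / d).
Let cl := Num.ceil (s / d).

Lemma fl_ge0 : 0 <= fl.
Proof. by rewrite floor_ge0 ltW // divr_gt0 // s_gt0. Qed.

Lemma cl_ge0 : 0 <= cl.
Proof. by rewrite ceil_ge0 (lt_trans _ (divr_gt0 s_gt0 d_gt0)) // ltrN10. Qed.

Lemma norm_lane_y_Jidx :
  `|lane_y J| = Num.min `|s - fl%:~R * d| `|s - cl%:~R * d|.
Proof.
rewrite minEle /Jidx -/fl -/cl.
by case: ifP => _; rewrite lane_y_absz_succ ?fl_ge0 ?cl_ge0.
Qed.

Lemma valid_Jidx : valid J.
Proof.
rewrite valid_laneE; apply/andP; split; first by rewrite /Jidx; case: ifP.
have: `|lane_y J| <= `|s - fl%:~R * d| by rewrite norm_lane_y_Jidx ge_min lexx.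
have fl_le : fl%:~R * d <= s by rewrite -ler_pdivlMr // floor_le.
have fl_ge : 0 <= fl%:~R * d by rewrite mulr_ge0 ?ler0z ?fl_ge0 // ltW.
rewrite [X in _ <= X]ger0_norm ?subr_ge0 // ler_norml => /andP[y_ge _].
by move: s_gt0 => *; lra.
Qed.

Lemma dist_Jidx_min j : valid j -> dist J <= dist j.
Proof.
rewrite valid_laneE => /andP[j_ge1 _].
rewrite lerD2l lerN2; apply: ler_wsqrtr; rewrite lerD2l lerN2.
rewrite -[lane_y J ^+ 2]real_normK ?num_real // -[lane_y j ^+ 2]real_normK ?num_real //.
rewrite lerXn2r ?nnegrE ?normr_ge0 // norm_lane_y_Jidx lane_y_pred //.
exact: (nearest_multiple s (j.-1)%:Z d_gt0).
Qed.

Definition arrival_time i k := (dist i + k%:R * d) / v.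

Lemma arrival_time_ge0 i k : 0 <= arrival_time i k.
Proof.
apply: divr_ge0 (ltW v_gt0).
exact: addr_ge0 (dist_ge0 i) (mulr_ge0 (ler0n _ k) (ltW d_gt0)).
Qed.

Lemma arrival_time_le i k t : valid i ->
  in_target s (robot_pos v d s i k t) -> arrival_time i k <= t.
Proof.
move=> i_valid; rewrite /robot_pos in_target_lane // ler_norml => /andP[_ x_le].
by rewrite ler_pdivrMr // mulrC; lra.
Qed.

Lemma in_target_arrival_time i k : valid i ->
  in_target s (robot_pos v d s i k (arrival_time i k)).
Proof.
move=> i_valid; rewrite /robot_pos /arrival_time in_target_lane //.
rewrite [v * _]mulrC divfK ?gt_eqF //.
rewrite (_ : _ - _ = s - dist i); last by ring.
by rewrite ger0_norm // /dist_j subKr sqrtr_ge0.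
Qed.

Lemma arrival_time_Jidx_min i k : valid i -> arrival_time J 0 <= arrival_time i k.
Proof.
move=> i_valid; rewrite ler_pM2r ?invr_gt0 // mul0r addr0.
by rewrite (le_trans (dist_Jidx_min i_valid)) // lerDl mulr_ge0 // ltW.
Qed.

Lemma first_arrival_timeE : first_arrival_time v d s = arrival_time J 0.
Proof.
set E := [set t : R | 0 <= t /\
  exists i k, valid i /\ in_target s (robot_pos v d s i k t)].
have E_J : E (arrival_time J 0).
  split; first exact: arrival_time_ge0.
  by exists J, 0%N; split; [|apply: in_target_arrival_time]; exact: valid_Jidx.
have E_lb : lbound E (arrival_time J 0).
  move=> t [_ [i [k [i_valid it]]]].
  exact: le_trans (arrival_time_Jidx_min k i_valid) (arrival_time_le i_valid it).
apply/le_anti/andP; split; first by apply: ge_inf E_J; exists 0 => t [].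
exact: lb_le_inf (ex_intro _ _ E_J) E_lb.
Qed.

Lemma reached_byE i k T : valid i ->
  reached_by v d s i k T <-> k%:R * d <= v * T + dist J - dist i.
Proof.
move=> i_valid; rewrite /reached_by first_arrival_timeE.
have -> : (k%:R * d <= v * T + dist J - dist i) =
          (arrival_time i k <= arrival_time J 0 + T).
  rewrite /arrival_time ler_pdivrMr // mulrDl divfK ?gt_eqF // mul0r addr0.
  by apply/idP/idP => h; lra.
split=> [[t [_ [t_le it]]]|arr_le].
  exact: le_trans (arrival_time_le i_valid it) t_le.
exists (arrival_time i k); split; first exact: arrival_time_ge0.
by split; last exact: in_target_arrival_time.
Qed.

Lemma N_laneE i T : valid i ->
  N_lane v d s i T = nmultiples_le d (v * T + dist J - dist i).
Proof.
move=> i_valid; rewrite /N_lane -(size_iota 0 (nmultiples_le _ _)).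
apply: card_fset_set_seq (iota_uniq _ _) _ => k.
by rewrite /= reached_byE // mem_iota /= nmultiples_leP.
Qed.

Lemma reached_by_ltn i k T : valid i -> reached_by v d s i k T <-> (k < N_lane v d s i T)%N.
Proof. by move=> i_valid; rewrite reached_byE // N_laneE // nmultiples_leP. Qed.

Lemma N_lane_formula i T : valid i -> (N_lane v d s i T)%:Z = N_formula v d s i T.
Proof.
move=> i_valid; rewrite N_laneE // nmultiples_leE // /N_formula.
have -> : ((dist i - dist J) / v <= T) = (0 <= v * T + dist J - dist i).
  by rewrite ler_pdivrMr //; apply/idP/idP => h; lra.
by case: ifP => // _; congr (Num.floor (_ / d + 1)); ring.
Qed.

Lemma N_totalE T : N_total v d s T = (\sum_(1 <= i < M.+1) N_lane v d s i T)%N.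
Proof.
have validE i : valid i = (i \in iota 1 M) by rewrite mem_iota add1n ltnS.
rewrite /N_total (@card_fset_set_seq _ _
  [seq (i, k) | i <- iota 1 M, k <- iota 0 (N_lane v d s i T)]).
- by rewrite size_allpairs_dep sumnE big_map; apply: eq_bigr => i _; rewrite size_iota.
- apply: allpairs_uniq_dep; [exact: iota_uniq | by move=> *; exact: iota_uniq |].
  by move=> [i k] [j l] _ _ /= [-> ->].
move=> [i k]; split.
  case=> i_valid ik; apply/allpairsPdep; exists i, k.
  by split=> //; [rewrite -validE | rewrite mem_iota /=; apply/reached_by_ltn].
case/allpairsPdep => j [l [j_in l_in [-> ->]]]; rewrite -validE in j_in.
split=> //; apply/reached_by_ltn => //.
by move: l_in; rewrite mem_iota.
Qed.

Lemma throughputE T :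
  throughput v d s T = T^-1 * (\sum_(1 <= i < M.+1) (N_formula v d s i T)%:~R) - T^-1.
Proof.
rewrite /throughput N_totalE natr_sum mulrBl mul1r [_ * T^-1]mulrC.
congr (_ * _ - _); apply: eq_big_nat => i /andP[i_ge1 i_le].
by rewrite -N_lane_formula //; apply/andP; split.
Qed.

Lemma dist_le i : dist i <= s.
Proof. by rewrite gerBl sqrtr_ge0. Qed.

Lemma N_lane_bounds i T : valid i -> s <= v * T ->
  v * T / d - s / d <= (N_lane v d s i T)%:R <= v * T / d + 1.
Proof.
move=> i_valid sT; rewrite N_laneE //.
have dJ_le := dist_Jidx_min i_valid; have dJ_ge0 := dist_ge0 J; have di_le := dist_le i.
have /nmultiples_le_bounds : 0 <= v * T + dist J - dist i by lra.
move=> /(_ _ d_gt0) /andP[lo hi].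
have : v * T / d - s / d <= (v * T + dist J - dist i) / d.
  by rewrite -mulrBl ler_pM2r ?invr_gt0 //; lra.
have : (v * T + dist J - dist i) / d <= v * T / d.
  by rewrite ler_pM2r ?invr_gt0 //; lra.
by move=> *; apply/andP; split; lra.
Qed.

Lemma N_total_bounds T : s <= v * T ->
  M%:R * (v * T / d - s / d) <= (N_total v d s T)%:R <= M%:R * (v * T / d + 1).
Proof.
move=> sT; have sum_const (c : R) : \sum_(1 <= i < M.+1) c = M%:R * c.
  by rewrite sumr_const_nat subSS subn0 mulr_natl.
rewrite N_totalE natr_sum -!sum_const; apply/andP; split;
  apply: ler_sum_nat => i /andP[i_ge1 i_le];
  by case/andP: (@N_lane_bounds i T (introT andP (conj i_ge1 i_le)) sT).
Qed.

Lemma throughput_cvg : throughput v d s x @[x --> +oo] --> M%:R * v / d.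
Proof.
apply: (@cvgr_dist_le_inv _ _ _ (M%:R * (s / d) + M%:R + 1)); near=> T.
have T_gt0 : 0 < T by near: T; apply: nbhs_pinfty_gt; exact: num_real.
have sT : s <= v * T.
  by rewrite -ler_pdivrMl //; near: T; apply: nbhs_pinfty_ge; exact: num_real.
have /andP[lo hi] := N_total_bounds sT.
have -> : M%:R * v / d - throughput v d s T =
          (M%:R * (v * T / d) - (N_total v d s T)%:R + 1) / T.
  by rewrite /throughput; field; rewrite !gt_eqF.
rewrite normrM [X in _ * X]gtr0_norm ?invr_gt0 // ler_pM2r ?invr_gt0 // ler_norml.
have M_ge0 : 0 <= M%:R :> R by [].
have sd_ge0 : 0 <= M%:R * (s / d) by rewrite mulr_ge0 // divr_ge0 // ltW ?s_gt0.
by apply/andP; split; lra.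
Unshelve. all: by end_near.
Qed.

Lemma floor_nlanes : Num.floor (2 * s / d + 1) = M%:Z.
Proof.
by rewrite floorDrz ?rpred1 // floor1 /nlanes intS gez0_abs ?floor_2s_div_ge0 // addrC.
Qed.
End ParallelLanesProof.

Theorem proposition4 (R : realType) (v d s : R) :
  0 < v -> 0 < d -> d / 2 <= s ->
  [/\ valid_lane d s (Jidx d s),
      (forall j : nat, valid_lane d s j -> dist_j d s (Jidx d s) <= dist_j d s j),
      in_target s (robot_pos v d s (Jidx d s) 0 (first_arrival_time v d s)),
      (forall T : R, 0 < T ->
         (forall i : nat, valid_lane d s i ->
            (N_lane v d s i T)%:Z = N_formula v d s i T) /\
         throughput v d s T =
           T^-1 * (\sum_(1 <= i < (nlanes d s).+1) (N_formula v d s i T)%:~R) - T^-1)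
    & throughput v d s x @[x --> +oo%R] --> ((Num.floor (2 * s / d + 1))%:~R * v / d : R)].
Proof.
move=> v_gt0 d_gt0 half_d_le_s; split.
- exact: valid_Jidx.
- exact: dist_Jidx_min.
- rewrite first_arrival_timeE //; apply: in_target_arrival_time => //; exact: valid_Jidx.
- by move=> T _; split=> [i|]; [exact: N_lane_formula | exact: throughputE].
- by rewrite floor_nlanes //; apply: throughput_cvg.
Qed.
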